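(* Let $0<p<0.1$. If indefinite growth occurs, then either the event $E$ occurs, or else there exists a good sequence $R_1,\dots,R_{n+1}$ of rectangles such that the event $G(R_1)\cap\bigcap_{i=1}^n D(R_i,R_{i+1})$ occurs.
   Context: Local bootstrap percolation on $\mathbb{Z}^2$ with parameter $p\in(0,1)$: sites are empty ($\circ$), occupied ($\bullet$) or active ($\star$). The initial configuration $\sigma$ has independent sites; the origin is $\star$ with probability $p$, else $\circ$; every other site is $\bullet$ with probability $p$, else $\circ$. Synchronous deterministic updates: each $\bullet$ becomes $\star$ if some $\star$ is within $\ell^1$-distance $2$; each $\circ$ becomes $\star$ if at least two $\star$'s are within $\ell^1$-distance $1$; other states are unchanged. Indefinite growth: every site eventually becomes active. Let $q=-\log(1-p)$, $A=\lceil 1/\sqrt q\rceil$, $B=\lfloor q^{-1}\log q^{-1}\rfloor$. A rectangle is a set $R=\{a,\dots,c\}\times\{b,\dots,d\}\subset\mathbb{Z}^2$, with dimensions $\dim(R)=(c-a+1,d-b+1)$; its columns are the sets $\{x\}\times\{b,\dots,d\}$, $a\le x\le c$, and rows are defined analogously. $R$ has a double gap in the columns (resp. rows) if two consecutive columns (resp. rows) of $R$ consist entirely of sites that are $\circ$ in the initial configuration $\sigma$. $G(R)$ is the event that $R$ has no double gap in the columns or rows. For rectangles $R=\{x_1,\dots,x_2\}\times\{y_1,\dots,y_2\}\subseteq R'=\{X_1,\dots,X_2\}\times\{Y_1,\dots,Y_2\}$, $D(R,R')$ is the event that each of the (possibly empty) rectangles $\{X_1,\dots,x_1-1\}\times\{Y_1,\dots,Y_2\}$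 and $\{x_2+1,\dots,X_2\}\times\{Y_1,\dots,Y_2\}$ has no double gap in the columns, and each of $\{X_1,\dots,X_2\}\times\{Y_1,\dots,y_1-1\}$ and $\{X_1,\dots,X_2\}\times\{y_2+1,\dots,Y_2\}$ has no double gap in the rows. $E$ is the union of the events $G(R)$ over all rectangles $R$ containing $0$ with one dimension in $[B-A-10,B-A]$ and the other in $[1,A]$. A sequence of rectangles $R_1,\dots,R_{n+1}$ ($n\ge1$) with $\dim(R_i)=(a_i,b_i)$, $s_i=a_{i+1}-a_i$, $t_i=b_{i+1}-b_i$ is good if: (i) $0\in R_1\subseteq R_2\subseteq\dots\subseteq R_{n+1}$; (ii) $\min(a_1,b_1)\in[A,A+3]$; (iii) $a_n+b_n\le B$; (iv) $a_{n+1}+b_{n+1}>B$; (v) for $i=1,\dots,n$, $s_i\ge a_i\sqrt q$ or $t_i\ge b_i\sqrt q$; (vi) for $i=1,\dots,n$, $s_i<a_i\sqrt q+4$ and $t_i<b_i\sqrt q+4$. *)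

From Stdlib Require Import Reals ZArith List Lra Lia.
Import ListNotations.
Open Scope Z_scope.

(** Site states: empty (circ), occupied (bullet), active (star). *)
Inductive state := Emp | Occ | Act.

Definition site := (Z * Z)%type.
Definition config := site -> state.

Definition l1 (d : site) : Z := Z.abs (fst d) + Z.abs (snd d).
Definition addS (x d : site) : site := (fst x + fst d, snd x + snd d).

(** All offsets d with l1 d <= r, for r <= 2. *)
Definition zr : list Z := [-2; -1; 0; 1; 2].
Definition ball (r : Z) : list site :=
  filter (fun d => l1 d <=? r) (list_prod zr zr).

Definition is_act (s : state) : bool :=
  match s with Act => true | _ => false end.

Definition step (c : config) : config := fun x =>
  match c x with
  | Act => Act
  | Occ => if existsb (fun d => is_act (c (addS x d))) (ball 2) then Act else Occ
  | Emp => if (2 <=? Z.of_nat (count_occ Bool.bool_dec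
                   (map (fun d => is_act (c (addS x d))) (ball 1)) true))%Z
           then Act else Emp
  end.

Fixpoint evolve (c : config) (t : nat) : config :=
  match t with O => c | S t' => step (evolve c t') end.

Definition indefinite_growth (sigma : config) : Prop :=
  forall x : site, exists t : nat, evolve sigma t x = Act.

Definition admissible_init (sigma : config) : Prop :=
  (sigma (0, 0) = Act \/ sigma (0, 0) = Emp) /\
  (forall x, x <> (0, 0) -> sigma x = Occ \/ sigma x = Emp).

(** Rectangles {x1..x2} x {y1..y2} (possibly empty). *)
Record rect := Rect { rx1 : Z; rx2 : Z; ry1 : Z; ry2 : Z }.

Definition in_rect (R : rect) (z : site) : Prop :=
  rx1 R <= fst z <= rx2 R /\ ry1 R <= snd z <= ry2 R.

Definition rect_sub (R R' : rect) : Prop :=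
  forall z, in_rect R z -> in_rect R' z.

Definition width (R : rect) : Z := rx2 R - rx1 R + 1.
Definition height (R : rect) : Z := ry2 R - ry1 R + 1.

Definition dgap_cols (sigma : config) (R : rect) : Prop :=
  exists x, rx1 R <= x /\ x + 1 <= rx2 R /\
    forall y, ry1 R <= y <= ry2 R -> sigma (x, y) = Emp /\ sigma (x + 1, y) = Emp.

Definition dgap_rows (sigma : config) (R : rect) : Prop :=
  exists y, ry1 R <= y /\ y + 1 <= ry2 R /\
    forall x, rx1 R <= x <= rx2 R -> sigma (x, y) = Emp /\ sigma (x, y + 1) = Emp.

Definition Gev (sigma : config) (R : rect) : Prop :=
  ~ dgap_cols sigma R /\ ~ dgap_rows sigma R.

Definition Dev (sigma : config) (R R' : rect) : Prop :=
  ~ dgap_cols sigma (Rect (rx1 R') (rx1 R - 1) (ry1 R') (ry2 R')) /\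
  ~ dgap_cols sigma (Rect (rx2 R + 1) (rx2 R') (ry1 R') (ry2 R')) /\
  ~ dgap_rows sigma (Rect (rx1 R') (rx2 R') (ry1 R') (ry1 R - 1)) /\
  ~ dgap_rows sigma (Rect (rx1 R') (rx2 R') (ry2 R + 1) (ry2 R')).

Definition Zfloor (r : R) : Z := up r - 1.
Definition Zceil (r : R) : Z := - Zfloor (- r).

Definition qpar (p : R) : R := (- ln (1 - p))%R.
Definition Apar (p : R) : Z := Zceil (/ sqrt (qpar p)).
Definition Bpar (p : R) : Z := Zfloor (/ qpar p * ln (/ qpar p)).

Definition Eev (p : R) (sigma : config) : Prop :=
  exists Rc : rect, in_rect Rc (0, 0) /\
    ((Bpar p - Apar p - 10 <= width Rc <= Bpar p - Apar p /\ 1 <= height Rc <= Apar p) \/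
     (Bpar p - Apar p - 10 <= height Rc <= Bpar p - Apar p /\ 1 <= width Rc <= Apar p)) /\
    Gev sigma Rc.

Definition good_seq (p : R) (n : nat) (Rs : nat -> rect) : Prop :=
  (1 <= n)%nat /\
  in_rect (Rs 1%nat) (0, 0) /\
  (forall i, (1 <= i <= n)%nat -> rect_sub (Rs i) (Rs (S i))) /\
  Apar p <= Z.min (width (Rs 1%nat)) (height (Rs 1%nat)) <= Apar p + 3 /\
  width (Rs n) + height (Rs n) <= Bpar p /\
  width (Rs (S n)) + height (Rs (S n)) > Bpar p /\
  (forall i, (1 <= i <= n)%nat ->
     let a := width (Rs i) in let b := height (Rs i) in
     let s := width (Rs (S i)) - a in let t := height (Rs (S i)) - b in
     ((IZR s >= IZR a * sqrt (qpar p))%R \/ (IZR t >= IZR b * sqrt (qpar p))%R) /\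
     (IZR s < IZR a * sqrt (qpar p) + 4)%R /\ (IZR t < IZR b * sqrt (qpar p) + 4)%R).

(* Follow the bounding box of the set of active sites. Activity spreads by
   l1-distance at most 2 per step, so each side of the box moves by at most 2 per
   step, and an initially empty site needs two active nearest neighbours, so the
   active set never crosses two consecutive initially empty lines: no box has a
   double gap, and neither has any annulus between two boxes. The rectangle of E,
   or the good sequence, is made of boxes taken at suitable first-passage times. *)

From Pilot Require Import Defs.
From Stdlib Require Import Reals ZArith Lra Lia List Classical ClassicalEpsilon Wf_nat.
Open Scope Z_scope.

Lemma least_nat (P : nat -> Prop) :
  (exists n, P n) -> exists n, P n /\ forall m, P m -> (n <= m)%nat.
Proof.
  intro Hex.
  destruct (dec_inh_nat_subset_has_unique_least_element P (fun n => classic (P n)) Hex)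
    as [n [Hn _]].
  now exists n.
Qed.

Lemma greatest_Z (P : Z -> Prop) (hi : Z) :
  (exists k, P k) -> (forall k, P k -> k <= hi) ->
  exists m, P m /\ forall k, P k -> k <= m.
Proof.
  intros [k0 Hk0] Hhi.
  destruct (least_nat (fun n => P (hi - Z.of_nat n))) as [n [Hn Hleast]].
  { exists (Z.to_nat (hi - k0)). rewrite Z2Nat.id by (specialize (Hhi k0 Hk0); lia).
    now replace (hi - (hi - k0)) with k0 by lia. }
  exists (hi - Z.of_nat n). split; [exact Hn|].
  intros k Hk. specialize (Hhi k Hk).
  assert (Hle := Hleast (Z.to_nat (hi - k))).
  rewrite Z2Nat.id in Hle by lia. replace (hi - (hi - k)) with k in Hle by lia.
  specialize (Hle Hk). lia.
Qed.

Lemma two_true_in_map {A : Type} (g : A -> bool) (l : list A) :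
  NoDup l -> (2 <= count_occ Bool.bool_dec (map g l) true)%nat ->
  exists d1 d2, In d1 l /\ In d2 l /\ d1 <> d2 /\ g d1 = true /\ g d2 = true.
Proof.
  induction l as [|x l IH]; intros Hnd Hcount; [cbn in Hcount; lia|].
  inversion Hnd as [|? ? Hx Hnd']; subst.
  cbn in Hcount. destruct (g x) eqn:Hgx; cbn in Hcount.
  - assert (Hy : In true (map g l)) by (apply (count_occ_In Bool.bool_dec); lia).
    apply in_map_iff in Hy as [y [Hgy Hy]].
    exists x, y. repeat split; auto using in_eq, in_cons.
    intros ->. contradiction.
  - destruct (IH Hnd' Hcount) as [d1 [d2 [H1 [H2 Hrest]]]].
    exists d1, d2. auto using in_cons.
Qed.

Lemma rect_sub_bounds (Q Q' : rect) z :
  in_rect Q z -> rect_sub Q Q' ->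
  rx1 Q' <= rx1 Q /\ rx2 Q <= rx2 Q' /\ ry1 Q' <= ry1 Q /\ ry2 Q <= ry2 Q'.
Proof.
  intros Hz Hsub. unfold in_rect in Hz.
  destruct (Hsub (rx1 Q, ry1 Q)) as [[? ?] [? ?]]; [unfold in_rect; cbn; lia|].
  destruct (Hsub (rx2 Q, ry2 Q)) as [[? ?] [? ?]]; [unfold in_rect; cbn; lia|].
  cbn in *. lia.
Qed.

(* The four strips of [Dev] are sub-rectangles of [Q'] spanning all of its rows
   (resp. columns). *)
Lemma Dev_of_Gev sigma (Q Q' : rect) z :
  in_rect Q z -> rect_sub Q Q' -> Gev sigma Q' -> Dev sigma Q Q'.
Proof.
  intros Hz Hsub [Hcols Hrows].
  pose proof (rect_sub_bounds _ _ _ Hz Hsub). unfold in_rect in Hz.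
  unfold Dev; repeat split; intros [x [Hlo [Hhi Hg]]]; cbn in *;
    [apply Hcols|apply Hcols|apply Hrows|apply Hrows];
    exists x; (split; [lia|split; [lia|exact Hg]]).
Qed.

Definition active (sigma : config) (t : nat) (z : site) : Prop := evolve sigma t z = Act.

Lemma in_ball_l1 r d : In d (ball r) -> l1 d <= r.
Proof. unfold ball. now intros [_ Hd%Z.leb_le]%filter_In. Qed.

Lemma is_act_true s : is_act s = true -> s = Act.
Proof. now destruct s. Qed.

Lemma step_Occ_to_Act (c : config) z :
  c z = Occ -> step c z = Act -> exists d, In d (ball 2) /\ c (addS z d) = Act.
Proof.
  unfold step. intros ->.
  destruct (existsb _ (ball 2)) eqn:Hex; [|discriminate]. intros _.
  apply existsb_exists in Hex as [d [Hd Hact]].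
  eauto using is_act_true.
Qed.

Lemma step_Emp_to_Act (c : config) z :
  c z = Emp -> step c z = Act ->
  exists d1 d2, In d1 (ball 1) /\ In d2 (ball 1) /\ d1 <> d2 /\
    c (addS z d1) = Act /\ c (addS z d2) = Act.
Proof.
  unfold step. intros ->.
  destruct (2 <=? _) eqn:Hcount; [|discriminate]. intros _.
  apply Z.leb_le in Hcount.
  assert (Hnd : NoDup (ball 1)) by (cbn; repeat constructor; cbn; intuition congruence).
  destruct (two_true_in_map (fun d => is_act (c (addS z d))) _ Hnd ltac:(lia))
    as [d1 [d2 [H1 [H2 [Hne [A1 A2]]]]]].
  exists d1, d2. repeat split; auto using is_act_true.
Qed.

Definition unit_dir (a b : Z) : Prop :=
  (a = 1 /\ b = 0) \/ (a = -1 /\ b = 0) \/ (a = 0 /\ b = 1) \/ (a = 0 /\ b = -1).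

Section Dynamics.

Variable sigma : config.

Lemma active_succ t z : active sigma t z -> active sigma (S t) z.
Proof. unfold active; cbn; unfold step. now intros ->. Qed.

Lemma active_mono t t' z : (t <= t')%nat -> active sigma t z -> active sigma t' z.
Proof. induction 1; auto using active_succ. Qed.

Lemma active_succ_near t z :
  active sigma (S t) z -> exists d, l1 d <= 2 /\ active sigma t (addS z d).
Proof.
  unfold active; cbn. destruct (evolve sigma t z) eqn:Ez; intro Hz.
  - destruct (step_Emp_to_Act _ _ Ez Hz) as [d [_ [Hd [_ [_ [Ad _]]]]]].
    apply in_ball_l1 in Hd. exists d. split; [lia|exact Ad].
  - destruct (step_Occ_to_Act _ _ Ez Hz) as [d [Hd Ad]].
    apply in_ball_l1 in Hd. eauto.
  - exists (0, 0). destruct z. unfold addS; cbn. now rewrite !Z.add_0_r.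
Qed.

Lemma active_some_initially t z : active sigma t z -> exists z0, active sigma 0 z0.
Proof.
  revert z; induction t as [|t IH]; intros z Hz; [eauto|].
  destruct (active_succ_near _ _ Hz) as [d [_ Hd]]. eauto.
Qed.

Lemma Emp_until_active t z :
  sigma z = Emp -> ~ active sigma t z -> evolve sigma t z = Emp.
Proof.
  intros HE. induction t as [|t IH]; intro Hna; [exact HE|].
  assert (Ht : evolve sigma t z = Emp) by (apply IH; eauto using active_succ).
  unfold active in Hna; cbn in *. unfold step in *. rewrite Ht in *.
  destruct (2 <=? _); congruence.
Qed.

Hypothesis adm : admissible_init sigma.

Lemma active0_origin z : active sigma 0 z -> z = (0, 0).
Proof.
  destruct adm as [_ Hother]. unfold active; cbn. intro Hz.
  apply NNPP. intro Hne. destruct (Hother z Hne); congruence.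
Qed.

Lemma active_l1_le t z : active sigma t z -> l1 z <= 2 * Z.of_nat t.
Proof.
  revert z. induction t as [|t IH]; intros z Hz.
  - rewrite (active0_origin _ Hz). reflexivity.
  - destruct (active_succ_near _ _ Hz) as [d [Hd Hzd]].
    specialize (IH _ Hzd). destruct z, d. unfold l1, addS in *; cbn [fst snd] in *. lia.
Qed.

(* The origin starts on the side [a x + b y < c] when [0 < c]. A site of the
   initially empty strip [c <= a x + b y <= c + 1] can only become active with two
   active nearest neighbours, but at most one of them lies strictly on the side
   [a x + b y < c]; so the active set never enters the strip. *)
Lemma double_gap_blocks (a b c : Z) (U : site -> Prop) (T : nat) :
  unit_dir a b ->
  (forall z, active sigma T z -> U z) ->
  (forall z, U z -> c <= a * fst z + b * snd z <= c + 1 -> sigma z = Emp) ->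
  forall z, active sigma T z -> c <= a * fst z + b * snd z -> c <= 0.
Proof.
  intros Hab HU Hgap.
  enough (Hbelow : 0 < c -> forall t z, (t <= T)%nat -> active sigma t z ->
                     a * fst z + b * snd z < c).
  { intros z Hz Hcz. apply Z.nlt_ge. intro Hc.
    specialize (Hbelow Hc T z (le_n T) Hz). lia. }
  intros Hc t. induction t as [|t IH]; intros z Ht Hz.
  { rewrite (active0_origin _ Hz). cbn. lia. }
  assert (IH' : forall z', active sigma t z' -> a * fst z' + b * snd z' < c)
    by (intros; apply IH; [lia|assumption]).
  destruct (classic (active sigma t z)) as [Hzt|Hzt]; [auto|].
  apply Z.nle_gt. intro Hcz.
  destruct (active_succ_near _ _ Hz) as [d [Hd Hzd]].
  apply IH' in Hzd.
  assert (HE : sigma z = Emp).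
  { apply Hgap; [apply HU, (active_mono (S t)); auto|].
    destruct z, d. unfold l1, addS in *; cbn in *.
    destruct Hab as [[-> ->]|[[-> ->]|[[-> ->]|[-> ->]]]]; lia. }
  destruct (step_Emp_to_Act _ _ (Emp_until_active _ _ HE Hzt) Hz)
    as [d1 [d2 [H1 [H2 [Hne [A1 A2]]]]]].
  apply IH' in A1, A2. apply in_ball_l1 in H1, H2.
  apply Hne. destruct z, d1, d2. unfold l1, addS in *; cbn in *.
  destruct Hab as [[-> ->]|[[-> ->]|[[-> ->]|[-> ->]]]]; f_equal; lia.
Qed.

Lemma double_gap_straddles_origin (a b k : Z) (U : site -> Prop) (T : nat) :
  unit_dir a b ->
  (forall z, active sigma T z -> U z) ->
  (forall z, U z -> k <= a * fst z + b * snd z <= k + 1 -> sigma z = Emp) ->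
  (exists z, active sigma T z /\ k <= a * fst z + b * snd z) ->
  (exists z, active sigma T z /\ a * fst z + b * snd z <= k + 1) ->
  k = 0 \/ k + 1 = 0.
Proof.
  intros Hab HU Hgap [z1 [A1 H1]] [z2 [A2 H2]].
  assert (k <= 0) by exact (double_gap_blocks a b k U T Hab HU Hgap z1 A1 H1).
  assert (- (k + 1) <= 0).
  { apply (double_gap_blocks (- a) (- b) (- (k + 1)) U T) with z2; auto; [| |lia].
    - unfold unit_dir in *. lia.
    - intros z Hz Hk. apply Hgap; [exact Hz|lia]. }
  lia.
Qed.

End Dynamics.

Lemma origin_active sigma :
  admissible_init sigma -> indefinite_growth sigma -> sigma (0, 0) = Act.
Proof.
  intros adm ig. destruct (ig (0, 0)) as [t Ht].
  destruct (active_some_initially _ _ _ Ht) as [z0 Hz0].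
  rewrite <- (active0_origin _ adm _ Hz0). exact Hz0.
Qed.

Section BoundingBox.

Variable sigma : config.
Hypothesis adm : admissible_init sigma.
Hypothesis origin_Act : sigma (0, 0) = Act.

Lemma active_origin t : active sigma t (0, 0).
Proof. apply (active_mono _ 0); [lia|exact origin_Act]. Qed.

Lemma exists_active_argmax t (f : site -> Z) :
  (forall z, f z <= l1 z) ->
  exists z, active sigma t z /\ forall z', active sigma t z' -> f z' <= f z.
Proof.
  intro Hf.
  destruct (greatest_Z (fun k => exists z, active sigma t z /\ f z = k) (2 * Z.of_nat t))
    as [m [[z [Hz <-]] Hmax]].
  - exists (f (0, 0)), (0, 0). split; [apply active_origin|reflexivity].
  - intros k [z [Hz <-]]. specialize (Hf z). specialize (active_l1_le _ adm _ _ Hz). lia.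
  - exists z. split; [exact Hz|]. eauto.
Qed.

Definition is_bbox (t : nat) (Q : rect) : Prop :=
  (forall z, active sigma t z -> in_rect Q z) /\
  (exists z, active sigma t z /\ fst z = rx1 Q) /\
  (exists z, active sigma t z /\ fst z = rx2 Q) /\
  (exists z, active sigma t z /\ snd z = ry1 Q) /\
  (exists z, active sigma t z /\ snd z = ry2 Q).

Lemma is_bbox_exists t : exists Q, is_bbox t Q.
Proof.
  destruct (exists_active_argmax t (fun z => - fst z)) as [z1 [A1 H1]]; [unfold l1; lia|].
  destruct (exists_active_argmax t fst) as [z2 [A2 H2]]; [unfold l1; lia|].
  destruct (exists_active_argmax t (fun z => - snd z)) as [z3 [A3 H3]]; [unfold l1; lia|].
  destruct (exists_active_argmax t snd) as [z4 [A4 H4]]; [unfold l1; lia|].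
  exists (Rect (fst z1) (fst z2) (snd z3) (snd z4)).
  split; [|repeat split; eauto].
  intros z Hz. specialize (H1 z Hz). specialize (H2 z Hz).
  specialize (H3 z Hz). specialize (H4 z Hz).
  unfold in_rect; cbn. lia.
Qed.

Definition bbox (t : nat) : rect := epsilon (inhabits (Rect 0 0 0 0)) (is_bbox t).

Lemma bbox_spec t : is_bbox t (bbox t).
Proof. unfold bbox. apply epsilon_spec, is_bbox_exists. Qed.

Lemma bbox_origin t : in_rect (bbox t) (0, 0).
Proof. apply bbox_spec, active_origin. Qed.

Lemma bbox_init : width (bbox 0) = 1 /\ height (bbox 0) = 1.
Proof.
  destruct (bbox_spec 0) as [_ [[z1 [A1 E1]] [[z2 [A2 E2]] [[z3 [A3 E3]] [z4 [A4 E4]]]]]].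
  apply active0_origin in A1, A2, A3, A4; auto. subst.
  unfold width, height. cbn in *. lia.
Qed.

Lemma bbox_mono t t' : (t <= t')%nat -> rect_sub (bbox t) (bbox t').
Proof.
  intros Ht z Hz.
  destruct (bbox_spec t) as [_ [[z1 [A1 E1]] [[z2 [A2 E2]] [[z3 [A3 E3]] [z4 [A4 E4]]]]]].
  destruct (bbox_spec t') as [Hin _].
  apply (active_mono _ _ t') in A1, A2, A3, A4; auto.
  apply Hin in A1, A2, A3, A4. unfold in_rect in *. lia.
Qed.

Lemma bbox_step t :
  width (bbox (S t)) <= width (bbox t) + 4 /\ height (bbox (S t)) <= height (bbox t) + 4.
Proof.
  destruct (bbox_spec t) as [Hin _].
  assert (Hnear : forall z, active sigma (S t) z ->
            rx1 (bbox t) - 2 <= fst z <= rx2 (bbox t) + 2 /\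
            ry1 (bbox t) - 2 <= snd z <= ry2 (bbox t) + 2).
  { intros z Hz. destruct (active_succ_near _ _ _ Hz) as [d [Hd Hzd]].
    apply Hin in Hzd. destruct z, d. unfold in_rect, l1, addS in *; cbn in *. lia. }
  destruct (bbox_spec (S t)) as [_ [[z1 [A1 E1]] [[z2 [A2 E2]] [[z3 [A3 E3]] [z4 [A4 E4]]]]]].
  apply Hnear in A1, A2, A3, A4. unfold width, height. lia.
Qed.

Lemma bbox_unbounded :
  indefinite_growth sigma ->
  forall N, exists t, N <= width (bbox t) /\ N <= height (bbox t).
Proof.
  intros ig N. destruct (ig (Z.abs N, Z.abs N)) as [t Ht]. exists t.
  pose proof (bbox_origin t) as H0. destruct (bbox_spec t) as [Hin _].
  apply Hin in Ht. unfold in_rect, width, height in *; cbn in *. lia.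
Qed.

Lemma bbox_no_double_gap t : Gev sigma (bbox t).
Proof.
  pose proof (bbox_origin t) as H0. unfold in_rect in H0; cbn in H0.
  destruct (bbox_spec t) as [Hin [[z1 [A1 E1]] [[z2 [A2 E2]] [[z3 [A3 E3]] [z4 [A4 E4]]]]]].
  split.
  - intros [x [Hlo [Hhi Hg]]].
    assert (Hx : x = 0 \/ x + 1 = 0).
    { apply (double_gap_straddles_origin sigma adm 1 0 x
               (fun z => ry1 (bbox t) <= snd z <= ry2 (bbox t)) t).
      - now left.
      - intros z Hz. apply Hin, Hz.
      - intros [u v] Hv Hu. cbn [fst snd] in *. destruct (Hg v Hv).
        now destruct (Z.eq_dec u x) as [->|]; [|replace u with (x + 1) by lia].
      - exists z2. split; [assumption|lia].
      - exists z1. split; [assumption|lia]. }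
    destruct (Hg 0) as [G0 G1]; [lia|].
    destruct Hx as [Hx|Hx]; [rewrite Hx in G0|rewrite Hx in G1]; congruence.
  - intros [y [Hlo [Hhi Hg]]].
    assert (Hy : y = 0 \/ y + 1 = 0).
    { apply (double_gap_straddles_origin sigma adm 0 1 y
               (fun z => rx1 (bbox t) <= fst z <= rx2 (bbox t)) t).
      - now right; right; left.
      - intros z Hz. apply Hin, Hz.
      - intros [u v] Hu Hv. cbn [fst snd] in *. destruct (Hg u Hu).
        now destruct (Z.eq_dec v y) as [->|]; [|replace v with (y + 1) by lia].
      - exists z4. split; [assumption|lia].
      - exists z3. split; [assumption|lia]. }
    destruct (Hg 0) as [G0 G1]; [lia|].
    destruct Hy as [Hy|Hy]; [rewrite Hy in G0|rewrite Hy in G1]; congruence.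
Qed.

End BoundingBox.

Section Scales.

Local Open Scope R_scope.

Variable p : R.
Hypothesis Hp : 0 < p < 1 / 10.

(* [q < 1/9] since [exp (1/9) > 1 + 1/9 > 1 / (1 - p)]. *)
Lemma qpar_bounds : 0 < qpar p < 1 / 9.
Proof.
  unfold qpar. split.
  - assert (ln (1 - p) < ln 1) by (apply ln_increasing; lra). rewrite ln_1 in *. lra.
  - assert (Hexp : 1 + 1 / 9 < exp (1 / 9)) by (apply exp_ineq1; lra).
    assert (Hlow : exp (- (1 / 9)) < 1 - p).
    { rewrite exp_Ropp. apply Rlt_le_trans with (/ (1 + 1 / 9)); [|lra].
      apply Rinv_lt_contravar; [apply Rmult_lt_0_compat|]; lra. }
    apply ln_increasing in Hlow; [|apply exp_pos]. rewrite ln_exp in Hlow. lra.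
Qed.

Lemma sqrt_qpar_bounds : 0 < sqrt (qpar p) < 1.
Proof.
  destruct qpar_bounds. split; [apply sqrt_lt_R0; lra|].
  rewrite <- sqrt_1. apply sqrt_lt_1; lra.
Qed.

(* With [s = 1 / sqrt q > 3]: [A < s + 1] and [B > s^2 ln (s^2) - 1 > 2 s^2 - 1]. *)
Lemma Apar_Bpar_bounds : (2 <= Apar p)%Z /\ (12 <= Bpar p - Apar p)%Z.
Proof.
  destruct qpar_bounds as [Hq0 Hq1]. destruct sqrt_qpar_bounds as [Hr0 _].
  unfold Apar, Bpar. set (s := / sqrt (qpar p)).
  assert (Hu : / qpar p = s * s).
  { unfold s. rewrite <- Rinv_mult, sqrt_sqrt; lra. }
  assert (Hs : 3 < s).
  { assert (9 < s * s).
    { rewrite <- Hu. replace 9 with (/ (1 / 9)) by field.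
      apply Rinv_lt_contravar; nra. }
    assert (0 < s) by (apply Rinv_0_lt_compat; lra). nra. }
  assert (Hln : 2 < ln (/ qpar p)).
  { assert (exp 2 <= 9).
    { replace 2 with (1 + 1) by lra. rewrite exp_plus.
      pose proof exp_le_3. pose proof (exp_pos 1). nra. }
    rewrite <- (ln_exp 2). apply ln_increasing; [apply exp_pos|nra]. }
  assert (2 * (s * s) <= / qpar p * ln (/ qpar p)).
  { rewrite Hu in *. rewrite (Rmult_comm 2). apply Rmult_le_compat_l; nra. }
  (* [Defs.Zceil] and [Defs.Zfloor] are Stdlib's [Zceil] and [Zfloor]. *)
  change Defs.Zceil with Zceil; change Defs.Zfloor with Zfloor.
  destruct (Zceil_bound s). destruct (Zfloor_bound (/ qpar p * ln (/ qpar p))).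
  split.
  - apply le_IZR. lra.
  - cut (11 < Zfloor (/ qpar p * ln (/ qpar p))%R - Zceil s)%Z; [lia|].
    assert (0 < (s - 3) * (2 * s + 5)) by (apply Rmult_lt_0_compat; lra).
    apply lt_IZR. rewrite minus_IZR. lra.
Qed.

End Scales.

Definition grows_enough (p : R) (R0 R1 : rect) : Prop :=
  (IZR (width R1 - width R0) >= IZR (width R0) * sqrt (qpar p))%R \/
  (IZR (height R1 - height R0) >= IZR (height R0) * sqrt (qpar p))%R.

Definition grows_boundedly (p : R) (R0 R1 : rect) : Prop :=
  (IZR (width R1 - width R0) < IZR (width R0) * sqrt (qpar p) + 4)%R /\
  (IZR (height R1 - height R0) < IZR (height R0) * sqrt (qpar p) + 4)%R.

Definition growth_chain (p : R) (n : nat) (Rs : nat -> rect) : Prop :=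
  (forall i, (1 <= i <= n)%nat ->
     rect_sub (Rs i) (Rs (S i)) /\
     grows_enough p (Rs i) (Rs (S i)) /\ grows_boundedly p (Rs i) (Rs (S i))) /\
  width (Rs n) + height (Rs n) <= Bpar p /\
  Bpar p < width (Rs (S n)) + height (Rs (S n)).

Definition E_shape (p : R) (Q : rect) : Prop :=
  (Bpar p - Apar p - 10 <= width Q <= Bpar p - Apar p /\ 1 <= height Q <= Apar p) \/
  (Bpar p - Apar p - 10 <= height Q <= Bpar p - Apar p /\ 1 <= width Q <= Apar p).

Lemma grows_enough_lt p R0 R1 :
  (0 < sqrt (qpar p))%R -> 1 <= width R0 -> 1 <= height R0 ->
  grows_enough p R0 R1 -> width R0 < width R1 \/ height R0 < height R1.
Proof.
  intros Hsq Hw Hh [Hg|Hg]; [left|right]; apply Z.sub_pos, lt_IZR;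
    apply Rlt_le_trans with (2 := Rge_le _ _ Hg); apply Rmult_lt_0_compat; auto;
    apply IZR_lt; lia.
Qed.

Lemma grows_boundedly_of_not_enough p R0 Rp R1 :
  ~ grows_enough p R0 Rp ->
  width R1 <= width Rp + 4 -> height R1 <= height Rp + 4 ->
  grows_boundedly p R0 R1.
Proof.
  unfold grows_enough, grows_boundedly. intros Hnot Hw Hh.
  apply not_or_and in Hnot as [Hw'%Rnot_ge_lt Hh'%Rnot_ge_lt].
  assert (IZR (width R1 - width R0) <= IZR (width Rp - width R0) + 4)%R
    by (rewrite <- plus_IZR; apply IZR_le; lia).
  assert (IZR (height R1 - height R0) <= IZR (height Rp - height R0) + 4)%R
    by (rewrite <- plus_IZR; apply IZR_le; lia).
  split; lra.
Qed.

Section BoxGrowth.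

Variable p : R.
Hypothesis Hp : (0 < p < 1 / 10)%R.

Variable box : nat -> rect.
Hypothesis box_origin : forall t, in_rect (box t) (0, 0).
Hypothesis box_init : width (box 0) = 1 /\ height (box 0) = 1.
Hypothesis box_mono : forall t t', (t <= t')%nat -> rect_sub (box t) (box t').
Hypothesis box_step : forall t,
  width (box (S t)) <= width (box t) + 4 /\ height (box (S t)) <= height (box t) + 4.
Hypothesis box_unbounded : forall N, exists t, N <= width (box t) /\ N <= height (box t).

Lemma box_dims_pos t : 1 <= width (box t) /\ 1 <= height (box t).
Proof. pose proof (box_origin t). unfold in_rect, width, height in *; cbn in *; lia. Qed.

Lemma box_dims_mono t t' :
  (t <= t')%nat -> width (box t) <= width (box t') /\ height (box t) <= height (box t').
Proof.
  intro Ht. destruct (rect_sub_bounds _ _ _ (box_origin t) (box_mono t t' Ht)).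
  unfold width, height. lia.
Qed.

Lemma box_grows_enough_lt t t' :
  grows_enough p (box t) (box t') ->
  width (box t) < width (box t') \/ height (box t) < height (box t').
Proof.
  destruct (box_dims_pos t).
  apply grows_enough_lt; [apply sqrt_qpar_bounds, Hp|lia|lia].
Qed.

Lemma box_grows_enough_later t t' : grows_enough p (box t) (box t') -> (t < t')%nat.
Proof.
  intro Hg. apply Nat.nle_gt. intro Ht'.
  destruct (box_dims_mono t' t Ht'), (box_grows_enough_lt t t' Hg); lia.
Qed.

Lemma box_eventually_grows_enough t : exists t', grows_enough p (box t) (box t').
Proof.
  destruct (box_unbounded (2 * width (box t))) as [t' [Hw _]].
  exists t'. left. destruct (box_dims_pos t), (sqrt_qpar_bounds p Hp).
  assert (IZR (width (box t)) <= IZR (width (box t') - width (box t)))%R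
    by (apply IZR_le; lia).
  assert (0 <= IZR (width (box t)))%R by (apply IZR_le; lia).
  nra.
Qed.

(* The next rectangle of the chain is the box at the first time its growth over
   [box t] is large enough: just before, the growth was not, and one step adds at
   most [4] to each side. *)
Lemma box_chain_from t :
  width (box t) + height (box t) <= Bpar p ->
  exists n ts, (1 <= n)%nat /\ ts 1%nat = t /\ growth_chain p n (fun i => box (ts i)).
Proof.
  remember (Z.to_nat (Bpar p - (width (box t) + height (box t)))) as k eqn:Hk.
  revert t Hk. induction k as [k IH] using lt_wf_ind. intros t Hk Hsmall.
  destruct (least_nat _ (box_eventually_grows_enough t)) as [t' [Ht' Hleast]].
  pose proof (box_grows_enough_later _ _ Ht') as Htt'.
  destruct t' as [|s]; [lia|].
  assert (Hnot : ~ grows_enough p (box t) (box s))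
    by (intro Hs; specialize (Hleast s Hs); lia).
  assert (Hlink : rect_sub (box t) (box (S s)) /\ grows_enough p (box t) (box (S s)) /\
                  grows_boundedly p (box t) (box (S s))).
  { split; [apply box_mono; lia|split; [exact Ht'|]].
    destruct (box_step s). now apply grows_boundedly_of_not_enough with (box s). }
  assert (Hlt : width (box t) + height (box t) < width (box (S s)) + height (box (S s)))
    by (destruct (box_dims_mono t (S s) ltac:(lia)), (box_grows_enough_lt t (S s) Ht'); lia).
  destruct (Z_lt_le_dec (Bpar p) (width (box (S s)) + height (box (S s))))
    as [Hbig|Hsmall'].
  - exists 1%nat, (fun i => match i with 2%nat => S s | _ => t end).
    split; [lia|split; [reflexivity|]].
    split; [intros i Hi; replace i with 1%nat by lia; exact Hlink|].
    split; [exact Hsmall|exact Hbig].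
  - assert (Hdec : (Z.to_nat (Bpar p - (width (box (S s)) + height (box (S s)))) < k)%nat)
      by lia.
    destruct (IH _ Hdec (S s) eq_refl Hsmall')
      as [n [ts [Hn [Hts [Hchain [Hend1 Hend2]]]]]].
    exists (S n), (fun i => match i with O | 1%nat => t | S j => ts j end).
    split; [lia|split; [reflexivity|]].
    split; [|destruct n as [|n]; [lia|split; assumption]].
    intros [|[|j]] Hi; [lia|cbn; rewrite Hts; exact Hlink|apply (Hchain (S j)); lia].
Qed.

(* Let [t1] be the first time both sides of the box reach [A]. If then
   [width + height <= B], the chain starts at [t1]; otherwise the long side
   already reached [B - A - 10] before [t1], while the short side was below [A]. *)
Lemma box_dichotomy :
  (exists t, E_shape p (box t)) \/ exists n ts, good_seq p n (fun i => box (ts i)).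
Proof.
  destruct (Apar_Bpar_bounds p Hp) as [HA HBA].
  destruct (least_nat (fun t => Apar p <= Z.min (width (box t)) (height (box t))))
    as [t1 [Ht1 Hleast1]].
  { destruct (box_unbounded (Apar p)) as [t [Hw Hh]]. exists t. lia. }
  destruct t1 as [|t0]; [destruct box_init; lia|].
  assert (Hshort : forall t, (t <= t0)%nat -> Z.min (width (box t)) (height (box t)) < Apar p)
    by (intros t Ht; apply Z.nle_gt; intro Hge; specialize (Hleast1 t Hge); lia).
  pose proof (Hshort t0 (le_n t0)) as Hshort0. destruct (box_step t0).
  destruct (Z_le_gt_dec (width (box (S t0)) + height (box (S t0))) (Bpar p))
    as [Hsmall|Hbig].
  - right.
    destruct (box_chain_from (S t0) Hsmall) as [n [ts [Hn [Hts [Hchain [Hend1 Hend2]]]]]].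
    exists n, ts. unfold good_seq. rewrite Hts.
    split; [exact Hn|split; [apply box_origin|]].
    split; [intros i Hi; apply (Hchain i Hi)|].
    split; [lia|split; [exact Hend1|split; [lia|]]].
    intros i Hi. destruct (Hchain i Hi) as [_ [He Hb]]. exact (conj He Hb).
  - left.
    destruct (least_nat
                (fun t => Bpar p - Apar p - 10 <= Z.max (width (box t)) (height (box t))))
      as [t2 [Ht2 Hleast2]].
    { exists t0. lia. }
    assert (Ht2t0 : (t2 <= t0)%nat) by (apply Hleast2; lia).
    destruct t2 as [|s]; [destruct box_init; lia|].
    assert (Hs : Z.max (width (box s)) (height (box s)) < Bpar p - Apar p - 10)
      by (apply Z.nle_gt; intro Hge; specialize (Hleast2 s Hge); lia).
    exists (S s). destruct (box_step s), (box_dims_pos (S s)).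
    specialize (Hshort (S s) Ht2t0). unfold E_shape. lia.
Qed.

End BoxGrowth.

Theorem lemma4 (p : R) (sigma : config) :
  (0 < p < 1 / 10)%R ->
  admissible_init sigma ->
  indefinite_growth sigma ->
  Eev p sigma \/
  exists (n : nat) (Rs : nat -> rect),
    good_seq p n Rs /\ Gev sigma (Rs 1%nat) /\
    (forall i, (1 <= i <= n)%nat -> Dev sigma (Rs i) (Rs (S i))).
Proof.
  intros Hp adm ig.
  pose proof (origin_active sigma adm ig) as H0.
  destruct (box_dichotomy p Hp (bbox sigma) (bbox_origin sigma adm H0)
              (bbox_init sigma adm H0) (bbox_mono sigma adm H0) (bbox_step sigma adm H0)
              (bbox_unbounded sigma adm H0 ig)) as [[t Ht]|[n [ts Hgood]]].
  - left. exists (bbox sigma t).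
    split; [|split; [exact Ht|]]; auto using bbox_origin, bbox_no_double_gap.
  - right. exists n, (fun i => bbox sigma (ts i)).
    split; [exact Hgood|split; [auto using bbox_no_double_gap|]].
    intros i Hi. destruct Hgood as [_ [_ [Hsub _]]].
    apply Dev_of_Gev with (0, 0); auto using bbox_origin, bbox_no_double_gap.
Qed.
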